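(* There exists a family of connected bipartite graphs $(G_N)_{N\ge 4}$ with $|V(G_N)|=N$, $\Delta(G_N)\le N-2<N-1$, and $\hat r_\infty(G_N)\to 1$ as $N\to\infty$.
   Context: All graphs are finite and simple; a graph is nonempty if it has at least one edge. $\Delta$ is maximum degree, $tK_2$ is a matching with $t$ edges. For graphs $F,G,H$, $F\to(G,H)$ means every red--blue coloring of $E(F)$ contains a red copy of $G$ or a blue copy of $H$, and $\hat r(G,H)=\min\{|E(F)|:F\to(G,H)\}$. For a nonempty graph $G$, $\hat r_\infty(G)=\lim_{t\to\infty}\frac{\hat r(tK_2,G)}{t\,|E(G)|}$ (this limit exists). *)

From Stdlib Require Import Reals.
From mathcomp Require Import all_boot.
Set Implicit Arguments. Unset Strict Implicit. Unset Printing Implicit Defensive.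

Definition simple_rel (T : finType) (e : rel T) : Prop :=
  symmetric e /\ irreflexive e.

Record sgraph := SGraph {
  nv : nat;
  adj : rel 'I_nv;
  adj_sym : symmetric adj;
  adj_irr : irreflexive adj }.

Definition edge_set (T : finType) (e : rel T) : {set {set T}} :=
  [set A : {set T} | [exists x, exists y, (A == [set x; y]) && e x y]].

Definition num_edges (T : finType) (e : rel T) : nat := #|edge_set e|.

Definition degree (T : finType) (e : rel T) (v : T) : nat := #|[set u | e v u]|.

Definition connected_graph (T : finType) (e : rel T) : Prop :=
  forall x y : T, connect e x y.

Definition bipartite (T : finType) (e : rel T) : Prop :=
  exists part : T -> bool, forall u v, e u v -> part u != part v.

(* The colouring c assigns to each edge {x,y} (as a 2-set) a colour:
   true = red, false = blue. [has_col_copy eF P eG] : there is a copy of the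
   graph eG in eF (an injective vertex map sending edges to edges) all of whose
   edges A satisfy P A. *)
Definition has_col_copy (T U : finType) (eF : rel T) (P : {set T} -> bool)
    (eG : rel U) : Prop :=
  exists f : U -> T, injective f /\
    forall u v, eG u v -> eF (f u) (f v) && P [set f u; f v].

Definition arrows (T U W : finType) (eF : rel T) (eG : rel U) (eH : rel W)
  : Prop :=
  forall c : {set T} -> bool,
    has_col_copy eF c eG \/ has_col_copy eF (fun A => ~~ c A) eH.

(* m = \hat r(G, H): minimum number of edges of a (finite simple) graph F with
   F -> (G, H). Host graphs are taken on vertex sets 'I_n (WLOG). *)
Definition is_size_ramsey (U W : finType) (eG : rel U) (eH : rel W) (m : nat)
  : Prop :=
  (exists n (eF : rel 'I_n), simple_rel eF /\ arrows eF eG eH /\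
                             num_edges eF = m) /\
  (forall n (eF : rel 'I_n), simple_rel eF -> arrows eF eG eH ->
                             m <= num_edges eF).

(* tK_2 on vertex set 'I_(2t): edges {2i, 2i+1}. *)
Definition matching_rel (t : nat) : rel 'I_(t.*2) :=
  fun i j => (i./2 == j./2) && (i != j).

Definition hat_r_inf_is (G : sgraph) (L : R) : Prop :=
  exists r : nat -> nat,
    (forall t, is_size_ramsey (@matching_rel t) (@adj G) (r t)) /\
    Un_cv (fun t => Rdiv (INR (r t)) (Rmult (INR t) (INR (num_edges (@adj G))))) L.

(* Let Δ be the degree of a vertex z of G.  Any F with F -> (tK_2, G) has at
   least tΔ edges: take a largest vertex set X such that at least Δ|X| edges
   of F meet X, and colour red exactly the edges meeting X.  A red tK_2 has t
   disjoint edges each meeting X, so t <= |X|; a blue G is impossible, since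
   the image of z would have at least Δ neighbours outside X and could be
   added to X.  Disjoint unions make t |-> r(tK_2, G) subadditive with
   r(K_2, G) <= |E(G)|, so by Fekete's lemma r_oo(G) exists and
   Δ <= r_oo(G) |E(G)| <= |E(G)|.  The broom on N vertices (a star K_{1,N-2}
   with one leaf extended by a pendant edge) is a connected bipartite tree
   with maximum degree N-2 and N-1 edges, hence 1 - 2/N <= r_oo <= 1. *)

From Stdlib Require Import Reals Lra ClassicalEpsilon Wf_nat.
From mathcomp Require Import all_boot zify.
Set Implicit Arguments. Unset Strict Implicit. Unset Printing Implicit Defensive.

Lemma imset_set2 (aT rT : finType) (f : aT -> rT) (a b : aT) :
  f @: [set a; b] = [set f a; f b].
Proof. by rewrite imsetU1 imset_set1. Qed.

Lemma split_lshift m n (i : 'I_m) : split (lshift n i) = inl i.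
Proof. exact: (unsplitK (inl _ i)). Qed.

Lemma split_rshift m n (i : 'I_n) : split (rshift m i) = inr i.
Proof. exact: (unsplitK (inr _ i)). Qed.

Definition disjoint_union n1 n2 (e1 : rel 'I_n1) (e2 : rel 'I_n2) : rel 'I_(n1 + n2) :=
  fun i j => match split i, split j with
  | inl a, inl b => e1 a b
  | inr a, inr b => e2 a b
  | _, _ => false
  end.

Section DisjointUnion.
Variables (n1 n2 : nat) (e1 : rel 'I_n1) (e2 : rel 'I_n2).
Local Notation e := (disjoint_union e1 e2).

Lemma disjoint_union_simple : simple_rel e1 -> simple_rel e2 -> simple_rel e.
Proof.
move=> [s1 i1] [s2 i2]; split; last by move=> i; rewrite /e /disjoint_union; case: split.
by move=> i j; rewrite /disjoint_union; case: split => a; case: split => b.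
Qed.

Lemma num_edges_disjoint_union : num_edges e <= num_edges e1 + num_edges e2.
Proof.
pose E1 := [set lshift n2 @: A | A : {set 'I_n1} in edge_set e1].
pose E2 := [set @rshift n1 n2 @: A | A : {set 'I_n2} in edge_set e2].
have edge_set_mem (n : nat) (e' : rel 'I_n) a b : e' a b -> [set a; b] \in edge_set e'.
  by move=> ab; rewrite inE; apply/existsP; exists a; apply/existsP; exists b; rewrite eqxx.
apply: (@leq_trans #|E1 :|: E2|); last first.
  by apply: leq_trans (leq_card_setU E1 E2) _; apply: leq_add; apply: leq_imset_card.
apply: subset_leq_card; apply/subsetP => A.
rewrite inE => /existsP [x /existsP [y /andP [/eqP -> xy]]].
move: xy; rewrite /disjoint_union.
case: split_ordP => a ->; case: split_ordP => b -> // ab; rewrite inE -!imset_set2.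
- by rewrite imset_f ?edge_set_mem.
- by rewrite orbC imset_f ?edge_set_mem.
Qed.

Lemma col_copy_disjoint_unionl (U : finType) (P : {set 'I_(n1 + n2)} -> bool) (eG : rel U) :
  has_col_copy e1 (fun A => P (lshift n2 @: A)) eG -> has_col_copy e P eG.
Proof.
move=> [g [g_inj gG]]; exists (fun u => lshift n2 (g u)); split.
  by move=> u v /lshift_inj /g_inj.
by move=> u v /gG; rewrite /disjoint_union !split_lshift imset_set2.
Qed.

Lemma col_copy_disjoint_unionr (U : finType) (P : {set 'I_(n1 + n2)} -> bool) (eG : rel U) :
  has_col_copy e2 (fun A => P (@rshift n1 n2 @: A)) eG -> has_col_copy e P eG.
Proof.
move=> [g [g_inj gG]]; exists (fun u => rshift n1 (g u)); split.
  by move=> u v /rshift_inj /g_inj.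
by move=> u v /gG; rewrite /disjoint_union !split_rshift imset_set2.
Qed.

Lemma matching_copy_disjoint_union t1 t2 (P : {set 'I_(n1 + n2)} -> bool) :
  has_col_copy e1 (fun A => P (lshift n2 @: A)) (@matching_rel t1) ->
  has_col_copy e2 (fun A => P (@rshift n1 n2 @: A)) (@matching_rel t2) ->
  has_col_copy e P (@matching_rel (t1 + t2)).
Proof.
move=> [f1 [inj1 f1M]] [f2 [inj2 f2M]].
pose f (i : 'I_((t1 + t2).*2)) : 'I_(n1 + n2) :=
  match split (cast_ord (doubleD t1 t2) i) with
  | inl a => lshift n2 (f1 a) | inr b => rshift n1 (f2 b) end.
exists f; split.
  move=> i j; rewrite /f; case: splitP => a Ha; case: splitP => b Hb /=.
  - by move/lshift_inj/inj1 => ab; apply: val_inj; move: Ha Hb; rewrite ab /=; lia.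
  - by move/(congr1 val) => /=; move: (ltn_ord (f1 a)); lia.
  - by move/(congr1 val) => /=; move: (ltn_ord (f1 b)); lia.
  - by move/rshift_inj/inj2 => ab; apply: val_inj; move: Ha Hb; rewrite ab /=; lia.
move=> u v; rewrite /matching_rel -(inj_eq val_inj) /= => uv.
rewrite /f; case: splitP => a Ha; case: splitP => b Hb /=.
- rewrite /disjoint_union !split_lshift -imset_set2; apply: f1M.
  by rewrite /matching_rel -(inj_eq val_inj) /=; move: Ha Hb uv => /=; lia.
- by exfalso; move: Ha Hb uv (ltn_ord a) => /=; lia.
- by exfalso; move: Ha Hb uv (ltn_ord b) => /=; lia.
- rewrite /disjoint_union !split_rshift -imset_set2; apply: f2M.
  by rewrite /matching_rel -(inj_eq val_inj) /=; move: Ha Hb uv => /=; lia.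
Qed.

Lemma disjoint_union_arrows (U : finType) (eG : rel U) t1 t2 :
  arrows e1 (@matching_rel t1) eG -> arrows e2 (@matching_rel t2) eG ->
  arrows e (@matching_rel (t1 + t2)) eG.
Proof.
move=> arr1 arr2 c.
have [M1 | G1] := arr1 (fun A => c (lshift n2 @: A));
  last exact/or_intror/col_copy_disjoint_unionl.
have [M2 | G2] := arr2 (fun A => c (@rshift n1 n2 @: A));
  last exact/or_intror/col_copy_disjoint_unionr.
exact/or_introl/matching_copy_disjoint_union.
Qed.

End DisjointUnion.

Lemma is_size_ramsey_unique (U W : finType) (eG : rel U) (eH : rel W) m1 m2 :
  is_size_ramsey eG eH m1 -> is_size_ramsey eG eH m2 -> m1 = m2.
Proof.
move=> [[n1 [e1 [s1 [a1 <-]]]] min1] [[n2 [e2 [s2 [a2 <-]]]] min2].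
by apply/eqP; rewrite eqn_leq min1 ?min2.
Qed.

Lemma size_ramsey_matching0 (U : finType) (eG : rel U) :
  is_size_ramsey (@matching_rel 0) eG 0.
Proof.
split=> //; exists 0, (fun _ _ => false); split=> //; split.
  by move=> c; left; exists id; split=> // -[].
by apply/eqP; rewrite cards_eq0; apply/eqP/setP => A; rewrite !inE; apply/existsP => -[[]].
Qed.

Lemma arrows_matching1_self n (e : rel 'I_n) : simple_rel e -> arrows e (@matching_rel 1) e.
Proof.
move=> [e_sym e_irr] c.
case: (boolP [exists x, exists y, e x y && c [set x; y]]) => [|no_red]; last first.
  right; exists id; split=> // u v uv; rewrite uv /=.
  by apply: contra no_red => red; apply/existsP; exists u; apply/existsP; exists v; rewrite uv.
case/existsP => x /existsP [y /andP [xy red]]; left.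
have x_neq_y : x != y by apply: contraTneq xy => ->; rewrite e_irr.
have two (i : 'I_(1.*2)) : i = 0 :> nat \/ i = 1 :> nat by move: (ltn_ord i) => /=; lia.
exists (fun i : 'I_(1.*2) => if i == 0 :> nat then x else y); split.
  move=> i j; have [i_ | i_] := two i; have [j_ | j_] := two j;
    rewrite i_ j_ /= => xy_eq; try by apply: val_inj; rewrite /= i_ j_.
  - by move: x_neq_y; rewrite xy_eq eqxx.
  - by move: x_neq_y; rewrite xy_eq eqxx.
move=> i j; rewrite /matching_rel -(inj_eq val_inj) /= => ij.
have [i_ | i_] := two i; have [j_ | j_] := two j; move: ij; rewrite i_ j_ //= => _.
- by rewrite xy red.
- by rewrite e_sym xy setUC red.
Qed.

Definition meets (T : finType) (X A : {set T}) : bool := [exists x in X, x \in A].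

Lemma meets_set2 (T : finType) (X : {set T}) a b :
  meets X [set a; b] = (a \in X) || (b \in X).
Proof.
apply/existsP/orP => [[x /andP [xX]]|[aX|bX]].
- by rewrite !inE => /orP [] /eqP <-; [left | right].
- by exists a; rewrite aX !inE eqxx.
- by exists b; rewrite bX !inE eqxx orbT.
Qed.

Section MatchingLowerBound.
Variables (T : finType) (eF : rel T).
Hypothesis eF_irr : irreflexive eF.

Definition edges_meeting (X : {set T}) := [set A in edge_set eF | meets X A].

Definition outer_degree (X : {set T}) (v : T) := #|[set u | eF v u & u \notin X]|.

Lemma edges_meeting_setU1 (X : {set T}) v : v \notin X ->
  #|edges_meeting X| + outer_degree X v <= #|edges_meeting (v |: X)|.
Proof.
move=> vX; pose new := [set [set v; u] | u in [set u | eF v u & u \notin X]].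
have card_new : #|new| = outer_degree X v.
  apply: card_in_imset => u1 u2; rewrite !inE => /andP [vu1 _] _ E.
  have : u1 \in [set v; u2] by rewrite -E !inE eqxx orbT.
  by rewrite !inE => /orP [/eqP u1v | /eqP //]; move: vu1; rewrite u1v eF_irr.
have new_old : [disjoint new & edges_meeting X].
  rewrite -setI_eq0; apply/eqP/setP => A; rewrite !inE.
  apply/negbTE/andP => -[/imsetP [u]]; rewrite inE => /andP [_ uX] -> /andP [_].
  by rewrite meets_set2 (negbTE vX) (negbTE uX).
have <- : #|new :|: edges_meeting X| = #|edges_meeting X| + outer_degree X v.
  by apply/eqP; rewrite addnC -card_new (leq_card_setU new _).2.
apply: subset_leq_card; apply/subsetP => A; rewrite !inE => /orP [/imsetP [u]|].
  rewrite inE => /andP [vu _] ->; rewrite meets_set2 !inE eqxx andbT.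
  by apply/existsP; exists v; apply/existsP; exists u; rewrite eqxx vu.
case/andP => -> /existsP [x /andP [xX xA]] /=.
by apply/existsP; exists x; rewrite !inE xX orbT xA.
Qed.

Lemma exists_saturated_set k : exists X : {set T},
  k * #|X| <= #|edges_meeting X| /\ forall v, v \notin X -> outer_degree X v < k.
Proof.
pose dense (X : {set T}) := k * #|X| <= #|edges_meeting X|.
have dense0 : dense set0 by rewrite /dense cards0 muln0.
case: (@arg_maxnP _ set0 dense (fun X => #|X|) dense0) => X dense_X X_max.
exists X; split=> // v vX; rewrite ltnNge; apply/negP => kv.
suff /X_max : dense (v |: X) by rewrite cardsU1 vX /= add1n ltnn.
rewrite /dense cardsU1 vX mulnSr.
exact: leq_trans (leq_add dense_X kv) (edges_meeting_setU1 vX).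
Qed.

Lemma matching_meeting_card (X : {set T}) t :
  has_col_copy eF (meets X) (@matching_rel t) -> t <= #|X|.
Proof.
move=> [f [f_inj fM]].
have lo_lt (i : 'I_t) : i.*2 < t.*2 by rewrite ltn_double.
have hi_lt (i : 'I_t) : i.*2.+1 < t.*2 by move: (ltn_ord i); lia.
pose lo i := Ordinal (lo_lt i); pose hi i := Ordinal (hi_lt i).
pose h i := if f (lo i) \in X then f (lo i) else f (hi i).
have hX i : h i \in X.
  have /fM /andP [_] : matching_rel (lo i) (hi i).
    by rewrite /matching_rel -(inj_eq val_inj) /=; lia.
  by rewrite meets_set2 /h; case: ifP.
have h_inj : injective h.
  have h_half i : exists2 a : 'I_t.*2, h i = f a & (a : nat)./2 = i.
    by rewrite /h; case: ifP => _; [exists (lo i) | exists (hi i)] => //=; lia.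
  move=> i j hij; have [a ha ai] := h_half i; have [b hb bj] := h_half j.
  by apply: val_inj; rewrite /= -ai -bj (f_inj a b) // -ha -hb.
rewrite -[t]card_ord -(card_imset _ h_inj).
by apply: subset_leq_card; apply/subsetP => _ /imsetP [i _ ->].
Qed.

Lemma col_copy_avoiding_degree (U : finType) (eG : rel U) (X : {set T}) z :
  has_col_copy eF (fun A => ~~ meets X A) eG -> 0 < degree eG z ->
  exists2 v, v \notin X & degree eG z <= outer_degree X v.
Proof.
move=> [g [g_inj gG]] /card_gt0P [u0]; rewrite inE => zu0.
have gz_out : g z \notin X.
  by move: (gG _ _ zu0) => /andP [_]; rewrite meets_set2 negb_or => /andP [].
exists (g z) => //; rewrite /degree -(card_imset _ g_inj).
apply: subset_leq_card; apply/subsetP => x /imsetP [u]; rewrite inE => /gG /andP [gzu].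
by rewrite meets_set2 negb_or => /andP [_ guX] ->; rewrite inE gzu.
Qed.

End MatchingLowerBound.

Lemma arrows_matching_num_edges (T U : finType) (eF : rel T) (eG : rel U) z t :
  simple_rel eF -> arrows eF (@matching_rel t) eG -> t * degree eG z <= num_edges eF.
Proof.
move=> [_ eF_irr] arr; have [->|deg_z] := posnP (degree eG z); first by rewrite muln0.
have [X [dense_X saturated_X]] := exists_saturated_set eF_irr (degree eG z).
have meeting_le : #|edges_meeting eF X| <= num_edges eF.
  by apply: subset_leq_card; apply/subsetP => A; rewrite inE => /andP [].
case: (arr (meets X)) => [/matching_meeting_card tX | /col_copy_avoiding_degree].
  apply: leq_trans meeting_le; apply: leq_trans dense_X.
  by rewrite mulnC leq_mul2l tX orbT.
by case/(_ z deg_z) => v /saturated_X; rewrite ltnNge => /negP.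
Qed.

Lemma sgraph_simple (G : sgraph) : simple_rel (@adj G).
Proof. exact: conj (@adj_sym G) (@adj_irr G). Qed.

Section MatchingSizeRamsey.
Variable G : sgraph.
Local Notation eG := (@adj G).

Lemma matching_host_exists t :
  exists n (eF : rel 'I_n), simple_rel eF /\ arrows eF (@matching_rel t) eG.
Proof.
elim: t => [|t [n [eF [F_simple F_arr]]]].
  by have [[n [eF [? [? _]]]] _] := size_ramsey_matching0 eG; exists n, eF.
exists (n + nv G), (disjoint_union eF eG).
split; first exact: disjoint_union_simple (sgraph_simple G).
by rewrite -addn1; apply: disjoint_union_arrows F_arr (arrows_matching1_self (sgraph_simple G)).
Qed.

Lemma size_ramsey_exists t : exists m, is_size_ramsey (@matching_rel t) eG m.
Proof.
pose host_of_size m := exists n (eF : rel 'I_n),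
  simple_rel eF /\ arrows eF (@matching_rel t) eG /\ num_edges eF = m.
have [n [eF [F_simple F_arr]]] := matching_host_exists t.
have host_eF : host_of_size (num_edges eF) by exists n, eF.
have [m [[m_host m_min] _]] := dec_inh_nat_subset_has_unique_least_element
  host_of_size (fun m => classic (host_of_size m)) (ex_intro _ _ host_eF).
exists m; split=> // n' eF' F'_simple F'_arr; apply/leP; apply: m_min.
by exists n', eF'.
Qed.

Variable r : nat -> nat.
Hypothesis r_size_ramsey : forall t, is_size_ramsey (@matching_rel t) eG (r t).

Lemma size_ramsey_matching0_eq : r 0 = 0.
Proof. exact: is_size_ramsey_unique (r_size_ramsey 0) (size_ramsey_matching0 eG). Qed.

Lemma size_ramsey_matchingD t1 t2 : r (t1 + t2) <= r t1 + r t2.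
Proof.
have [[n1 [e1 [s1 [a1 <-]]]] _] := r_size_ramsey t1.
have [[n2 [e2 [s2 [a2 <-]]]] _] := r_size_ramsey t2.
apply: leq_trans (num_edges_disjoint_union e1 e2).
by apply: (r_size_ramsey _).2; [apply: disjoint_union_simple | apply: disjoint_union_arrows].
Qed.

Lemma size_ramsey_matching1_le : r 1 <= num_edges eG.
Proof.
by apply: (r_size_ramsey 1).2; [apply: sgraph_simple | apply/arrows_matching1_self/sgraph_simple].
Qed.

Lemma size_ramsey_matching_ge z t : t * degree eG z <= r t.
Proof.
have [[n [eF [F_simple [F_arr <-]]]] _] := r_size_ramsey t.
exact: arrows_matching_num_edges F_simple F_arr.
Qed.

End MatchingSizeRamsey.

Lemma degree_add2_le_card (T : finType) (e : rel T) (v b : T) :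
  irreflexive e -> b != v -> ~~ e v b -> degree e v + 2 <= #|T|.
Proof.
move=> e_irr bv vb; have -> : 2 = #|[set v; b]| by rewrite cards2 eq_sym bv.
have disj : [disjoint [set u | e v u] & [set v; b]].
  rewrite -setI_eq0; apply/eqP/setP => x; rewrite !inE.
  by case: eqP => [->|_]; [rewrite e_irr | case: eqP => [->|_]; rewrite ?(negbTE vb) ?andbF].
have /eqP <- : #|[set u | e v u] :|: [set v; b]| == degree e v + #|[set v; b]|.
  by rewrite (leq_card_setU _ _).2.
exact: max_card.
Qed.

Definition broom_adj (N : nat) : rel 'I_N := fun i j =>
  (i != j) && [|| (i == 0 :> nat) && (1 <= j <= N - 2),
                  (j == 0 :> nat) && (1 <= i <= N - 2),
                  (i == 1 :> nat) && (j == N - 1 :> nat) |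
                  (j == 1 :> nat) && (i == N - 1 :> nat)].

Lemma broom_sym N : symmetric (@broom_adj N).
Proof. by move=> i j; rewrite /broom_adj eq_sym; case: (i != j) => //=; lia. Qed.

Lemma broom_irr N : irreflexive (@broom_adj N).
Proof. by move=> i; rewrite /broom_adj eqxx. Qed.

Definition broom (N : nat) : sgraph := SGraph (@broom_sym N) (@broom_irr N).

Section Broom.
Variable N : nat.
Hypothesis N_ge4 : 4 <= N.

Let hub_lt : 0 < N. Proof. lia. Qed.
Let tip_lt : N - 1 < N. Proof. lia. Qed.
Let hub := Ordinal hub_lt.
Let tip := Ordinal tip_lt.

Lemma broom_connected : connected_graph (@broom_adj N).
Proof.
have to_hub (x : 'I_N) : connect (@broom_adj N) x hub.
  have [-> | x_tip] := eqVneq x tip.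
    have one_lt : 1 < N by lia.
    apply: (@connect_trans _ _ (Ordinal one_lt)); apply: connect1;
      rewrite /broom_adj -(inj_eq val_inj) /=; lia.
  have [-> // | x_hub] := eqVneq x hub.
  apply: connect1; move: x_tip x_hub; rewrite /broom_adj -!(inj_eq val_inj) /=.
  by move: (ltn_ord x); lia.
move=> x y; apply: connect_trans (to_hub x) _.
by rewrite (sym_connect_sym (@broom_sym N)); apply: to_hub.
Qed.

Lemma broom_bipartite : bipartite (@broom_adj N).
Proof.
exists (fun v : 'I_N => (v == 0 :> nat) || (v == N - 1 :> nat)) => u v.
by rewrite /broom_adj -(inj_eq val_inj) /=; move: (ltn_ord u) (ltn_ord v); lia.
Qed.

Lemma broom_degree_le v : degree (@broom_adj N) v <= N - 2.
Proof.
pose b := if v == 0 :> nat then N - 1 else if v == 1 :> nat then 2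
          else if v == N - 1 :> nat then 0 else 1.
have b_lt : b < N by rewrite /b; move: (ltn_ord v); do ! case: ifP; lia.
suff : degree (@broom_adj N) v + 2 <= N by lia.
rewrite -[N in _ <= N]card_ord.
apply: (@degree_add2_le_card _ _ v (Ordinal b_lt) (@broom_irr N));
  rewrite /broom_adj /= /b -?(inj_eq val_inj) /=; move: (ltn_ord v); do ! case: ifP; lia.
Qed.

Lemma broom_hub_degree : exists hub, N - 2 <= degree (@broom_adj N) hub.
Proof.
exists hub.
have sub : ~: [set hub; tip] \subset [set u | broom_adj hub u].
  by apply/subsetP => u; rewrite !inE /broom_adj -!(inj_eq val_inj) /=; move: (ltn_ord u); lia.
apply: leq_trans (subset_leq_card sub).
have := cardsC [set hub; tip]; rewrite cards2 card_ord -(inj_eq val_inj) /=.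
by case: eqP => [| _] /=; lia.
Qed.

End Broom.

Lemma broom_num_edges N : num_edges (@broom_adj N) <= N.
Proof.
pose parent (v : 'I_N) : 'I_N := insubd v (if v == N - 1 :> nat then 1 else 0).
apply: (@leq_trans #|[set [set v; parent v] | v : 'I_N]|); last first.
  by apply: leq_trans (leq_imset_card _ _) _; rewrite cardT size_enum_ord.
apply: subset_leq_card; apply/subsetP => A.
rewrite inE => /existsP [x /existsP [y /andP [/eqP -> xy]]]; apply/imsetP.
have [child_y | child_x] : parent y = x \/ parent x = y.
  suff : val (parent y) = val x \/ val (parent x) = val y by case=> /val_inj; [left | right].
  move: xy; rewrite /broom_adj /parent !val_insubd -(inj_eq val_inj) /=.
  by move: (ltn_ord x) (ltn_ord y); do ! case: ifP; lia.
- by exists y; rewrite // child_y setUC.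
- by exists x; rewrite // child_x.
Qed.

Section Fekete.
Variable a : nat -> nat.
Hypothesis a0 : a 0 = 0.
Hypothesis a_subadd : forall m n, a (m + n) <= a m + a n.

Lemma subadditive_mul_add q m s : a (q * m + s) <= q * a m + a s.
Proof.
elim: q => [|q IH] //; rewrite !mulSn -addnA; apply: leq_trans (a_subadd _ _) _.
by rewrite -addnA leq_add2l.
Qed.

Lemma subadditive_le_mul1 s : a s <= s * a 1.
Proof. by have := subadditive_mul_add s 1 0; rewrite muln1 addn0 a0 addn0. Qed.

Lemma subadditive_div_bound n m : 0 < m -> a n * m <= n * a m + m * (m * a 1).
Proof.
move=> m_gt0; have a_n : a n <= n %/ m * a m + m * a 1.
  rewrite {1}(divn_eq n m); apply: leq_trans (subadditive_mul_add _ _ _) _.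
  rewrite leq_add2l; apply: leq_trans (subadditive_le_mul1 _) _.
  by rewrite leq_mul2r ltnW ?ltn_mod ?orbT.
apply: leq_trans (_ : (n %/ m * a m + m * a 1) * m <= _); first by rewrite leq_mul2r a_n orbT.
by rewrite mulnDl mulnAC [m * a 1 * m]mulnC leq_add2r leq_mul2r leq_divM orbT.
Qed.

Local Open Scope R_scope.

Lemma subadditive_ratio_bound n m : (0 < n)%N -> (0 < m)%N ->
  INR (a n) / INR n <= INR (a m) / INR m + INR (m * a 1) / INR n.
Proof.
move=> n_gt0 m_gt0; have n_pos : 0 < INR n by apply/lt_0_INR/ltP.
have m_pos : 0 < INR m by apply/lt_0_INR/ltP.
have := le_INR _ _ (leP (subadditive_div_bound n m_gt0)).
rewrite !(plus_INR, mult_INR) => bound.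
apply: (Rmult_le_reg_r (INR n * INR m)); first exact: Rmult_lt_0_compat.
have -> : INR (a n) / INR n * (INR n * INR m) = INR (a n) * INR m by field; lra.
by apply: Rle_trans bound _; apply: Req_le; field; lra.
Qed.

Lemma glb_exists (f : nat -> R) : (forall t, 0 <= f t) ->
  exists l, (forall t, l <= f t) /\ forall x, (forall t, x <= f t) -> x <= l.
Proof.
move=> f_ge0; pose S x := exists t, x = - f t.
have S_bound : bound S by exists 0 => x [t ->]; have := f_ge0 t; lra.
have [m [m_ub m_lub]] := completeness S S_bound (ex_intro _ _ (ex_intro _ 0%N erefl)).
exists (- m); split=> [t | x x_lb].
  by have := m_ub _ (ex_intro _ t erefl); lra.
suff : m <= - x by lra.
by apply: m_lub => _ [t ->]; have := x_lb t; lra.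
Qed.

Lemma fekete : exists l, Un_cv (fun t => INR (a t) / INR t) l /\
  (forall t, l <= INR (a t.+1) / INR t.+1) /\
  (forall x, (forall t, x <= INR (a t.+1) / INR t.+1) -> x <= l).
Proof.
have ratio_ge0 t : 0 <= INR (a t.+1) / INR t.+1.
  by apply: Rle_mult_inv_pos; [apply: pos_INR | apply/lt_0_INR/ltP].
have [l [l_lb l_glb]] := glb_exists ratio_ge0.
exists l; split=> // eps eps_pos.
have [m m_close] : exists m, INR (a m.+1) / INR m.+1 < l + eps / 2.
  apply: NNPP => no_m; suff : l + eps / 2 <= l by lra.
  by apply: l_glb => t; apply: Rnot_lt_le => close; apply: no_m; exists t.
have [N N_large] := INR_archimed (eps / 2) (INR (m.+1 * a 1)) ltac:(lra).
exists N.+1 => n /leP N_lt_n; have n_gt0 : (0 < n)%N by lia.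
have n_large : INR N <= INR n by apply/le_INR/leP; lia.
have ratio_n := subadditive_ratio_bound n_gt0 (ltn0Sn m).
have tail : INR (m.+1 * a 1) / INR n < eps / 2.
  apply: (Rmult_lt_reg_r (INR n)); first by apply/lt_0_INR/ltP.
  have -> : INR (m.+1 * a 1) / INR n * INR n = INR (m.+1 * a 1) by field; apply/not_0_INR; lia.
  have : INR N * (eps / 2) <= INR n * (eps / 2) by apply: Rmult_le_compat_r; lra.
  lra.
have := l_lb n.-1; rewrite prednK // => l_le.
by rewrite /Rdist Rabs_right; lra.
Qed.

End Fekete.

Local Open Scope R_scope.

Lemma hat_r_inf_bounds (G : sgraph) (z : 'I_(nv G)) : exists L, hat_r_inf_is G L /\
  INR (degree (@adj G) z) <= L * INR (num_edges (@adj G)) /\ L <= 1.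
Proof.
have [r r_size_ramsey] := choice _ (size_ramsey_exists G).
have [l [r_cv [l_lb l_glb]]] :=
  fekete (size_ramsey_matching0_eq r_size_ramsey) (size_ramsey_matchingD r_size_ramsey).
set E := INR (num_edges (@adj G)).
have l_le_E : l <= E.
  apply: Rle_trans (l_lb 0%N) _; rewrite Rdiv_1_r.
  exact/le_INR/leP/size_ramsey_matching1_le.
have deg_le_l : INR (degree (@adj G) z) <= l.
  apply: l_glb => t; apply: (Rmult_le_reg_r (INR t.+1)); first by apply/lt_0_INR/ltP.
  have -> : INR (r t.+1) / INR t.+1 * INR t.+1 = INR (r t.+1) by field; apply: not_0_INR.
  rewrite -mult_INR; apply/le_INR/leP; rewrite multE mulnC.
  exact: size_ramsey_matching_ge.
exists (l / E); split.
  exists r; split=> //.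
  apply: (Un_cv_ext (fun t => INR (r t) / INR t * / E)).
    by move=> t; rewrite /Rdiv Rinv_mult Rmult_assoc.
  apply: CV_mult r_cv _ => eps eps_pos.
  by exists 0%N => n _; rewrite /Rdist Rminus_diag Rabs_R0.
have [E0 | E_neq0] := Req_dec E 0; first by rewrite E0 /Rdiv Rinv_0; lra.
have E_pos : 0 < E by have := pos_INR (num_edges (@adj G)); rewrite -/E; lra.
have l_E : l / E * E = l by field.
split; first by rewrite l_E.
by apply: (Rmult_le_reg_r E) => //; rewrite l_E; lra.
Qed.

Lemma Un_cv_of_dist_le (u : nat -> R) (l c : R) (n0 : nat) :
  (forall n, (n0 <= n)%N -> Rabs (u n - l) <= c / INR n) -> Un_cv u l.
Proof.
move=> close eps eps_pos; have [M M_large] := INR_archimed eps c eps_pos.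
exists (maxn M n0).+1 => n /leP n_large.
have n_pos : 0 < INR n by apply/lt_0_INR/ltP; lia.
have M_le_n : INR M <= INR n by apply/le_INR/leP; lia.
have c_n : c / INR n < eps.
  apply: (Rmult_lt_reg_r (INR n)) => //.
  have -> : c / INR n * INR n = c by field; lra.
  have : INR M * eps <= INR n * eps by apply: Rmult_le_compat_r; lra.
  lra.
by apply: Rle_lt_trans (close n _) c_n; lia.
Qed.

Lemma broom_hat_r_inf N : (4 <= N)%N ->
  exists L, hat_r_inf_is (broom N) L /\ Rabs (L - 1) <= 2 / INR N.
Proof.
move=> N_ge4; have [hub hub_deg] := broom_hub_degree N_ge4.
have [L [L_lim [L_lb L_le1]]] := @hat_r_inf_bounds (broom N) hub.
exists L; split=> //; move: L_lb => /= L_lb.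
have N_ge4R : 4 <= INR N by have := le_INR 4 N (leP N_ge4); rewrite /=; lra.
have E_le_N : INR (num_edges (@broom_adj N)) <= INR N by apply/le_INR/leP/broom_num_edges.
have E_ge0 := pos_INR (num_edges (@broom_adj N)).
have deg_ge : INR N - 2 <= INR (degree (@broom_adj N) hub).
  by rewrite -(minus_INR N 2); [apply/le_INR/leP | apply/leP; lia].
have L_pos : 0 < L by nra.
have L_close : INR N - 2 <= L * INR N by nra.
rewrite Rabs_left1; last lra.
apply: (Rmult_le_reg_r (INR N)); first lra.
have -> : 2 / INR N * INR N = 2 by field; lra.
lra.
Qed.

Lemma broom_hat_r_inf_seq : exists L : nat -> R, forall N, (4 <= N)%N ->
  hat_r_inf_is (broom N) (L N) /\ Rabs (L N - 1) <= 2 / INR N.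
Proof.
apply: (choice (fun N L =>
  (4 <= N)%N -> hat_r_inf_is (broom N) L /\ Rabs (L - 1) <= 2 / INR N)) => N.
have [/broom_hat_r_inf [L L_spec] | N_small] := leqP 4 N.
  by exists L.
by exists 0 => N_ge4; exfalso; lia.
Qed.

Local Close Scope R_scope.

Theorem corollary3p6 :
  exists G : nat -> sgraph,
    (forall N, 4 <= N ->
       nv (G N) = N /\
       connected_graph (@adj (G N)) /\
       bipartite (@adj (G N)) /\
       (forall v, degree (@adj (G N)) v <= N - 2)) /\
    exists L : nat -> R,
      (forall N, 4 <= N -> hat_r_inf_is (G N) (L N)) /\
      Un_cv L R1.
Proof.
have [L L_spec] := broom_hat_r_inf_seq.
exists broom; split.
  move=> N N_ge4; split=> //; split; first exact: broom_connected N_ge4.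
  by split; [exact: broom_bipartite | exact: broom_degree_le N_ge4].
exists L; split; first by move=> N /L_spec [].
by apply: (@Un_cv_of_dist_le _ _ 2 4) => N /L_spec [].
Qed.
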